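(* Let $W$ be an eventually periodic subset of $\mathbb{Z}^d$ with periods $u_1,\dots,u_d$, and let $\mathscr{W}_1,\mathcal{W}$ be as defined in the context. Suppose $\mathscr{W}_1$ is nonempty. Then $W$ has a minimal complement in $\mathbb{Z}^d$ if either of the following holds: (1) $\pi(\mathcal{W}\cup\mathscr{W}_1)$ is a translate of a subgroup of $\mathbb{Z}^d/\mathcal{L}$; (2) every nontrivial element of $\mathbb{Z}^d/\mathcal{L}$ has order two, and either (a) each of $\pi(\mathscr{W}_1),\pi(\mathcal{W})$ is a singleton, or (b) the complement of $\pi(\mathscr{W}_1\cup\mathcal{W})$ in $\mathbb{Z}^d/\mathcal{L}$ is a singleton.
   Context: $d\geqslant1$, $\mathbb{N}=\{0,1,2,\dots\}$. Let $u_1,\dots,u_d\in\mathbb{Z}^d$ satisfy no nontrivial $\mathbb{Z}$-linear relation, $\mathcal{L}=\mathbb{Z}u_1+\dots+\mathbb{Z}u_d$, $P=\mathbb{N}u_1+\dots+\mathbb{N}u_d$, $\pi:\mathbb{Z}^d\to\mathbb{Z}^d/\mathcal{L}$ the quotient map. A nonempty $X\subseteq\mathbb{Z}^d$ is eventually periodic with periods $u_1,\dots,u_d$ if $X\subseteq F+P$ for some nonempty finite $F\subseteq\mathbb{Z}^d$ and $x+P\subseteq X$ for all but finitely many $x\in X$. For such $W$: $\mathscr{W}=\{w\in W:w+P\not\subseteq W\}$; $\mathcal{W}=\{w\in W\setminus\mathscr{W}:(w-P)\cap(W\setminus\mathscr{W})=\{w\}\}$; $\mathscr{W}_1$ is the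 set of elements of $\mathscr{W}$ congruent modulo $\mathcal{L}$ to no element of $\mathcal{W}$. A nonempty $M\subseteq\mathbb{Z}^d$ is a complement of $W$ if $M+W=\mathbb{Z}^d$, and a minimal complement if no proper subset of $M$ is a complement of $W$. *)

From mathcomp Require Import all_boot all_order all_algebra.
Set Implicit Arguments. Unset Strict Implicit. Unset Printing Implicit Defensive.
Import Order.TTheory GRing.Theory Num.Theory.
Local Open Scope ring_scope.

Definition Zd (d : nat) := 'rV[int]_d.
Definition zset (d : nat) := Zd d -> Prop.

Section Defs.
Variables (d : nat) (u : 'I_d -> Zd d).

Definition Zfree : Prop :=
  forall c : 'I_d -> int, \sum_(i < d) (u i) *~ (c i) = 0 -> forall i, c i = 0.

Definition inL (x : Zd d) : Prop :=
  exists c : 'I_d -> int, x = \sum_(i < d) (u i) *~ (c i).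

Definition inP (x : Zd d) : Prop :=
  exists c : 'I_d -> nat, x = \sum_(i < d) (u i) *+ (c i).

Definition congL (x y : Zd d) : Prop := inL (x - y).

Definition eventually_periodic (X : zset d) : Prop :=
  (exists x, X x) /\
  (exists F : seq (Zd d), F != [::] /\
     forall x, X x -> exists2 f, f \in F & inP (x - f)) /\
  (exists E : seq (Zd d),
     forall x, X x -> x \notin E -> forall p, inP p -> X (x + p)).

Definition scriptW (W : zset d) (w : Zd d) : Prop :=
  W w /\ ~ (forall p, inP p -> W (w + p)).

Definition calW (W : zset d) (w : Zd d) : Prop :=
  (W w /\ ~ scriptW W w) /\
  (forall v, (W v /\ ~ scriptW W v) -> (exists p, inP p /\ v = w - p) -> v = w).

Definition scriptW1 (W : zset d) (w : Zd d) : Prop :=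
  scriptW W w /\ forall v, calW W v -> ~ congL w v.

(* subgroups of Z^d containing L: these correspond to subgroups of Z^d/L *)
Definition subgroupZd (H : zset d) : Prop :=
  H 0 /\ forall x y, H x -> H y -> H (x - y).

(* pi(S) as an L-saturated subset of Z^d : x is in it iff pi x \in pi(S) *)
Definition satL (S : zset d) (x : Zd d) : Prop :=
  exists2 s, S s & congL x s.

End Defs.

Definition is_complement (d : nat) (M W : zset d) : Prop :=
  (exists m, M m) /\ forall x, exists m w, [/\ M m, W w & x = m + w].

Definition is_minimal_complement (d : nat) (M W : zset d) : Prop :=
  is_complement M W /\
  forall M' : zset d, (forall x, M' x -> M x) -> (exists x, M x /\ ~ M' x) ->
    ~ is_complement M' W.

(* Every element of [W] outside [scriptW] is congruent modulo [L] to an element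
   [t] of [calW], whose whole cone [t + P] lies in [W], while the elements of
   [scriptW1] are congruent to no such [t].  Take a union [K] of cosets of [L]
   with [K + W = Z^d], and call [y] forced when every decomposition [y = k + w]
   with [k] in [K] has [w] in [scriptW1].  As [scriptW1] is finite, discarding
   the points of [K] one at a time along an enumeration of [Z^d] leaves a
   minimal [M] in [K] that still reaches every forced point through
   [scriptW1].  Choose [K] so that every point is forced or lies in a class
   [k + t] with [t] in [calW] such that, for some [s] in [scriptW1], the class
   [k + s] is forced and reached from [K] only through the class of [s]; then
   writing [x - t + s - p = m + w] with [p] in [P] large gives
   [x = m + (t + p + w - s)] with [t + p + w - s] in [t + P].  So [M] is a
   complement, and a minimal one.  In case (1) [K] is a transversal of the
   subgroup, case (2)(a) is an instance of case (1), and in case (2)(b) [K] is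
   [L] together with the coset [c + s + L]. *)

From mathcomp Require Import all_boot all_order all_algebra.
From mathcomp Require Import zify ring.
From Stdlib Require Import Classical ClassicalEpsilon.
Set Implicit Arguments. Unset Strict Implicit. Unset Printing Implicit Defensive.
Import Order.TTheory GRing.Theory Num.Theory.
Local Open Scope ring_scope.

Section Lattice.
Variables (d : nat) (u : 'I_d -> Zd d).

Lemma inL0 : inL u 0.
Proof. by exists (fun _ => 0); rewrite big1 // => i _; rewrite mulr0z. Qed.

Lemma inLD x y : inL u x -> inL u y -> inL u (x + y).
Proof.
move=> [a ->] [b ->]; exists (fun i => a i + b i).
by rewrite -big_split; apply: eq_bigr => i _; rewrite mulrzDr.
Qed.

Lemma inLN x : inL u x -> inL u (- x).
Proof.
move=> [a ->]; exists (fun i => - a i).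
by rewrite -sumrN; apply: eq_bigr => i _; rewrite mulrNz.
Qed.

Lemma inL_eq x y : x = y -> inL u y -> inL u x.
Proof. by move->. Qed.

Lemma inP0 : inP u 0.
Proof. by exists (fun _ => 0%N); rewrite big1. Qed.

Lemma inPD x y : inP u x -> inP u y -> inP u (x + y).
Proof.
move=> [a ->] [b ->]; exists (fun i => (a i + b i)%N).
by rewrite -big_split; apply: eq_bigr => i _; rewrite mulrnDr.
Qed.

Lemma inP_inL x : inP u x -> inL u x.
Proof. by move=> [a ->]; exists (fun i => (a i)%:Z). Qed.

Lemma inP_sum_ge0 (c : 'I_d -> int) : (forall i, 0 <= c i) -> inP u (\sum_i u i *~ c i).
Proof.
move=> c_ge0; exists (fun i => `|c i|%N); apply: eq_bigr => i _.
by rewrite -mulrz_nat natz gez0_abs.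
Qed.

Lemma inL_absorb x : inL u x -> exists2 p, inP u p & inP u (p + x).
Proof.
move=> [c ->]; exists (\sum_i u i *+ `|c i|%N); first by exists (fun i => `|c i|%N).
rewrite -big_split (eq_bigr (fun i => u i *~ (`|c i|%:Z + c i))) => [|i _]; last first.
  by rewrite mulrzDr pmulrn.
by apply: inP_sum_ge0 => i; lia.
Qed.

Lemma congL_refl x : congL u x x.
Proof. by rewrite /congL subrr; apply: inL0. Qed.

Lemma congL_sym x y : congL u x y -> congL u y x.
Proof. by move=> /inLN; rewrite opprB. Qed.

Lemma inL_seq_absorb (s : seq (Zd d)) :
  exists2 p, inP u p & forall x, x \in s -> inL u x -> inP u (p + x).
Proof.
elim: s => [|x s [p Pp IH]]; first by exists 0 => //; apply: inP0.
case: (classic (inL u x)) => [/inL_absorb [q Pq Pqx] | Lx'].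
  exists (q + p) => [|y]; first exact: inPD.
  rewrite inE => /orP [/eqP -> _ | ys Ly]; first by rewrite addrAC; apply: inPD.
  by rewrite -addrA; apply: inPD (IH y ys Ly).
by exists p => // y; rewrite inE => /orP [/eqP -> /Lx' [] | /IH].
Qed.

Hypothesis Zf : Zfree u.

Lemma Zfree_nat_inj (a b : 'I_d -> nat) :
  \sum_i u i *+ a i = \sum_i u i *+ b i -> a =1 b.
Proof.
move=> eq_ab i; apply/eqP; rewrite -eqz_nat -subr_eq0; apply/eqP.
apply: (Zf (c := fun i => (a i)%:Z - (b i)%:Z)) => /=.
under eq_bigr => j _ do rewrite mulrzBr -!pmulrn.
by rewrite sumrB eq_ab subrr.
Qed.

Lemma coef_sum_bounded (F : seq (Zd d)) w : exists B, forall f c,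
  f \in F -> w - f = \sum_i u i *+ c i -> (\sum_i c i <= B)%N.
Proof.
elim: F => [|f F [B IH]]; first by exists 0%N.
case: (classic (exists c0, w - f = \sum_i u i *+ c0 i)) => [[c0 ef] | nf].
  exists (\sum_i c0 i + B)%N => g c; rewrite inE => /orP [/eqP -> | gF] eg.
    by rewrite (eq_bigr _ (fun i _ => Zfree_nat_inj (etrans (esym eg) ef) i)) leq_addr.
  exact: leq_trans (IH g c gF eg) (leq_addl _ _).
exists B => g c; rewrite inE => /orP [/eqP -> eg | gF]; last exact: IH.
by case: nf; exists c.
Qed.

Lemma below_bounded (X : zset d) (F : seq (Zd d)) w :
  (forall x, X x -> exists2 f, f \in F & inP u (x - f)) ->
  exists B, forall v c, X v -> w - v = \sum_i u i *+ c i -> (\sum_i c i <= B)%N.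
Proof.
move=> XF; have [B HB] := coef_sum_bounded F w.
exists B => v c Xv ev; have [f fF [c' ev']] := XF v Xv.
have : (\sum_i (c i + c' i) <= B)%N.
  apply: (HB f) => //; rewrite -(subrKA v w (- f)) ev ev' -big_split.
  by apply: eq_bigr => i _; rewrite mulrnDr.
by rewrite big_split; apply: leq_trans (leq_addr _ _).
Qed.

End Lattice.

Section MinimalCover.
Variable T : countZmodType.

Definition covers (M S Y : T -> Prop) : Prop :=
  forall y, Y y -> exists m w, [/\ M m, S w & y = m + w].

Lemma covers_sub (M M' S Y : T -> Prop) :
  (forall x, M x -> M' x) -> covers M S Y -> covers M' S Y.
Proof.
by move=> MM' cov y /cov [m [w [Mm Sw ->]]]; exists m, w; split => //; apply: MM'.
Qed.

Lemma seq_witness_antitone (A : eqType) (s : seq A) (P : nat -> A -> Prop) :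
  (forall n m a, (n <= m)%N -> P m a -> P n a) ->
  (forall n, exists2 a, a \in s & P n a) -> exists2 a, a \in s & forall n, P n a.
Proof.
elim: s P => [|a s IH] P Pmon Pex; first by case: (Pex 0%N).
case: (classic (forall n, P n a)) => [Pa | /not_all_ex_not [n0 Pa']].
  by exists a => //; apply: mem_head.
have [b bs Pb] : exists2 b, b \in s & forall n, P (n + n0)%N b.
  apply: (IH (fun n => P (n + n0)%N)) => [n m b nm | n].
    by apply: Pmon; rewrite leq_add2r.
  have [b] := Pex (n + n0)%N; rewrite inE => /orP [/eqP -> Pna | bs Pb].
    by case: Pa'; apply: Pmon Pna; apply: leq_addl.
  by exists b.
exists b => [|n]; first by rewrite inE bs orbT.
by apply: Pmon (Pb n); apply: leq_addr.
Qed.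

Variables (K S Y : T -> Prop) (E : seq T).
Hypotheses (SE : forall w, S w -> w \in E) (coverK : covers K S Y).

Definition remove1 (M : T -> Prop) (x : T) : T -> Prop := fun z => M z /\ z <> x.

Fixpoint prune (n : nat) : T -> Prop :=
  if n is n'.+1 then
    if unpickle n' is Some x then
      if excluded_middle_informative (covers (remove1 (prune n') x) S Y)
      then remove1 (prune n') x else prune n'
    else prune n'
  else K.

Lemma prune_antitone n m x : (n <= m)%N -> prune m x -> prune n x.
Proof.
move=> /subnKC <-; elim: (m - n)%N => [|k IH]; rewrite ?addn0 // addnS /=.
by case: (unpickle _) => [y|//]; case: excluded_middle_informative => // _ [/IH].
Qed.

Lemma prune_covers n : covers (prune n) S Y.
Proof.
elim: n => [|n IH] //=; case: (unpickle n) => [y|//].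
by case: excluded_middle_informative.
Qed.

Definition pruned : T -> Prop := fun x => forall n, prune n x.

Lemma pruned_covers : covers pruned S Y.
Proof.
move=> y Yy.
have Pex n : exists2 w, w \in E & S w /\ prune n (y - w).
  have [m [w [Mm Sw ->]]] := prune_covers n Yy.
  by exists w; [apply: SE | rewrite addrK].
have [w _ Pw] := seq_witness_antitone (P := fun n w => S w /\ prune n (y - w))
  (fun n m w nm '(conj Sw Pw) => conj Sw (prune_antitone nm Pw)) Pex.
exists (y - w), w; split; last by rewrite subrK.
- by move=> n; case: (Pw n).
- by case: (Pw 0%N).
Qed.

(* Every point of [pruned] was kept at its turn because removing it broke the
   covering, so no proper subset of [pruned] still covers. *)
Lemma pruned_minimal M :
  (forall x, M x -> pruned x) -> covers M S Y -> forall x, pruned x -> M x.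
Proof.
move=> Msub covM x Px; apply: NNPP => M'x.
have := Px (pickle x).+1; rewrite /= pickleK.
case: excluded_middle_informative => [_ [_ //] | []].
apply: covers_sub covM => z Mz; split; first exact: Msub.
by move=> zx; apply: M'x; rewrite -zx.
Qed.

Lemma exists_minimal_cover : exists M, [/\ forall x, M x -> K x, covers M S Y &
  forall M', (forall x, M' x -> M x) -> covers M' S Y -> forall x, M x -> M' x].
Proof.
exists pruned; split; [by move=> x /(_ 0%N) | exact: pruned_covers |].
exact: pruned_minimal.
Qed.

End MinimalCover.

Lemma exists_class_repr (T : choiceType) (R : T -> T -> Prop) :
  (forall x, R x x) -> (forall x y, R x y -> R y x) ->
  (forall x y z, R x y -> R y z -> R x z) ->
  exists r : T -> T, (forall x, R x (r x)) /\ (forall x y, R x y -> r x = r y).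
Proof.
move=> Rrefl Rsym Rtrans.
pose Rb x z := if excluded_middle_informative (R x z) then true else false.
have RbP x z : Rb x z <-> R x z by rewrite /Rb; case: excluded_middle_informative.
have Rb_ex x : exists z, Rb x z by exists x; apply/RbP.
exists (fun x => xchoose (Rb_ex x)); split => [x | x y Rxy].
  exact/RbP/(xchooseP (Rb_ex x)).
apply: eq_xchoose => z; apply/idP/idP => /RbP Rz; apply/RbP.
  exact: Rtrans (Rsym _ _ Rxy) Rz.
exact: Rtrans Rxy Rz.
Qed.

Ltac row_ring := apply/rowP => ?; rewrite !mxE; ring.
Ltac inL_close := repeat first [eassumption | apply: inL0 | apply: inLN | apply: inLD].
Ltac inL_by e := rewrite ?/congL; apply: (inL_eq (y := e)); [row_ring | inL_close].

Section Complements.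
Variables (d : nat) (u : 'I_d -> Zd d) (W : zset d).
Hypotheses (Zf : Zfree u) (EP : eventually_periodic u W).

Lemma scriptW_finite : exists E : seq (Zd d), forall w, scriptW u W w -> w \in E.
Proof.
have [_ [_ [E WE]]] := EP; exists E => w [Ww Ww'].
by case: (boolP (w \in E)) => // /(WE w Ww).
Qed.

Lemma calW_W t : calW u W t -> W t.
Proof. by case=> [[]]. Qed.

Lemma scriptW1_W s : scriptW1 u W s -> W s.
Proof. by case=> [[]]. Qed.

Lemma calW_addP t p : calW u W t -> inP u p -> W (t + p).
Proof.
move=> [[Wt Wt'] _] Pp; apply: NNPP => Wtp'.
by apply: Wt'; split => // /(_ p Pp).
Qed.

Lemma not_calW_descend v : W v -> ~ scriptW u W v -> ~ calW u W v ->
  exists q : 'I_d -> nat, [/\ (0 < \sum_i q i)%N, W (v - \sum_i u i *+ q i)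
                           & ~ scriptW u W (v - \sum_i u i *+ q i)].
Proof.
move=> Wv Sv' Cv'.
have [v' [[Wv' Sv''] [p [[q ep] ev']] neq]] : exists v', [/\ W v' /\ ~ scriptW u W v',
    exists p, inP u p /\ v' = v - p & v' <> v].
  apply: NNPP => v_min; apply: Cv'; split => // v' Tv' Pv'.
  by apply: NNPP => neq; apply: v_min; exists v'.
subst v' p; exists q; split => //; rewrite lt0n; apply: contra_notN neq.
rewrite sum_nat_eq0 => /forallP q0.
by rewrite big1 ?subr0 // => i _; rewrite (eqP (q0 i)).
Qed.

(* Descending from [w] inside [W] minus [scriptW] must stop at an element of [calW],
   because [W] lies in [F + P] with [F] finite. *)
Lemma congL_calW_of_W w : W w -> ~ scriptW u W w -> exists t, calW u W t /\ congL u w t.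
Proof.
move=> Ww Sw'; apply: NNPP => no_t.
have [_ [[F [_ WF]] _]] := EP.
have [B HB] := below_bounded Zf w WF.
have chain k : exists v c,
    [/\ W v, ~ scriptW u W v, w - v = \sum_i u i *+ c i & (k <= \sum_i c i)%N].
  elim: k => [|k [v [c [Wv Sv' ev kc]]]].
    by exists w, (fun _ => 0%N); rewrite subrr big1.
  have Cv' : ~ calW u W v.
    move=> Cv; apply: no_t; exists v; split => //.
    by rewrite /congL ev; apply: inP_inL; exists c.
  have [q [q_gt0 Wv' Sv'']] := not_calW_descend Wv Sv' Cv'.
  exists (v - \sum_i u i *+ q i), (fun i => c i + q i)%N; split => //.
    by rewrite opprB addrCA addrC ev -big_split; apply: eq_bigr => i _; rewrite mulrnDr.
  by rewrite big_split -addn1 leq_add.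
have [v [c [Wv _ ev Bc]]] := chain B.+1.
by have := HB v c Wv ev; rewrite leqNgt Bc.
Qed.

Lemma scriptW1_of_W w :
  W w -> (forall t, calW u W t -> ~ congL u w t) -> scriptW1 u W w.
Proof.
move=> Ww w_calW'; split => //; apply: NNPP => Sw'.
by have [t [Ct wt]] := congL_calW_of_W Ww Sw'; apply: w_calW' Ct wt.
Qed.

Lemma W_satL w : W w -> satL u (fun s => calW u W s \/ scriptW1 u W s) w.
Proof.
move=> Ww; case: (classic (exists t, calW u W t /\ congL u w t)) => [[t [Ct wt]] | no_t].
  by exists t; first left.
exists w; last exact: congL_refl.
by right; apply: scriptW1_of_W => // t Ct wt; apply: no_t; exists t.
Qed.

Definition forced (K : zset d) (y : Zd d) : Prop :=
  forall m w, K m -> W w -> y = m + w -> scriptW1 u W w.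

Lemma forcedP K y :
  (forall m t, K m -> calW u W t -> ~ congL u (y - m) t) -> forced K y.
Proof.
move=> y_calW' m w Km Ww ey; apply: scriptW1_of_W => // t Ct.
have -> : w = y - m by rewrite ey addrC addKr.
exact: y_calW'.
Qed.

Definition anchored (K : zset d) (k s : Zd d) : Prop :=
  [/\ scriptW1 u W s, forall y, congL u y (k + s) -> forced K y &
      forall m w, K m -> scriptW1 u W w -> congL u (m + w) (k + s) -> congL u w s].

(* [p] is chosen in [P] so that [p + w - s] lies in [P] for each of the
   finitely many [w] in [scriptW] congruent to [s]. *)
Lemma anchored_covers K M k s t x : (forall x, M x -> K x) ->
  covers M (scriptW1 u W) (forced K) -> anchored K k s ->
  calW u W t -> congL u x (k + t) -> exists m w, [/\ M m, W w & x = m + w].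
Proof.
move=> MK covM [Ss Ks_forced Ks_unique] Ct xt.
have [E SE] := scriptW_finite.
have [p Pp Pabsorb] := inL_seq_absorb u [seq e - s | e <- E].
have Lp := inP_inL Pp.
have yks : congL u (x - t + s - p) (k + s) by inL_by (x - (k + t) - p).
have [m [w [Mm Sw ey]]] := covM _ (Ks_forced _ yks).
have ws : congL u w s by apply: Ks_unique (MK m Mm) Sw _; rewrite -ey.
exists m, (t + (p + (w - s))); split => //.
  by apply: calW_addP Ct (Pabsorb _ _ ws); apply: map_f; apply: SE; case: Sw.
have -> : m = x - t + s - p - w by rewrite ey addrK.
row_ring.
Qed.

(* A complement inside [M] reaches the [forced K] points through [scriptW1] by
   the very definition of [forced], so minimality among such covers gives
   minimality among complements. *)
Lemma minimal_complement_of_cover K :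
  (forall x, exists m w, [/\ K m, W w & x = m + w]) ->
  (forall M, (forall x, M x -> K x) -> covers M (scriptW1 u W) (forced K) ->
     forall x, exists m w, [/\ M m, W w & x = m + w]) ->
  exists M, is_minimal_complement M W.
Proof.
move=> covK covK_sub; have [E SE] := scriptW_finite.
have covK1 : covers K (scriptW1 u W) (forced K).
  move=> y Ky; have [m [w [Km Ww ey]]] := covK y.
  by exists m, w; split => //; apply: Ky ey.
have [M [MK covM Mmin]] :=
  exists_minimal_cover (fun w (Sw : scriptW1 u W w) => SE w Sw.1) covK1.
have covMW := covK_sub M MK covM.
exists M; split; first by split => //; have [m [w [Mm _ _]]] := covMW 0; exists m.
move=> M' M'M [x [Mx M'x']] [_ covM']; apply: M'x'; apply: Mmin => // y Ky.
have [m [w [M'm Ww ey]]] := covM' y; exists m, w; split => //.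
exact: Ky m w (MK m (M'M m M'm)) Ww ey.
Qed.

Lemma minimal_complement_of_anchors K :
  (forall x, exists m w, [/\ K m, W w & x = m + w]) ->
  (forall x, forced K x \/
     exists k s t, [/\ anchored K k s, calW u W t & congL u x (k + t)]) ->
  exists M, is_minimal_complement M W.
Proof.
move=> covK forced_or_anchored; apply: (minimal_complement_of_cover covK) => M MK covM x.
case: (forced_or_anchored x) => [Kx | [k [s [t [Aks Ct xt]]]]].
  by have [m [w [Mm /scriptW1_W Ww ->]]] := covM x Kx; exists m, w.
exact: anchored_covers MK covM Aks Ct xt.
Qed.
End Complements.


Lemma subgroupZdN d (H : zset d) x : subgroupZd H -> H x -> H (- x).
Proof. by move=> [H0 HB] Hx; rewrite -sub0r; apply: HB. Qed.

Lemma subgroupZdD d (H : zset d) x y : subgroupZd H -> H x -> H y -> H (x + y).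
Proof.
by move=> subH Hx Hy; rewrite -[y]opprK; apply: subH.2 => //; apply: subgroupZdN.
Qed.

Section TranslateOfSubgroup.
Variables (d : nat) (u : 'I_d -> Zd d) (W : zset d).
Hypotheses (Zf : Zfree u) (EP : eventually_periodic u W).
Variables (H : zset d) (g : Zd d) (r : Zd d -> Zd d).
Hypotheses (subH : subgroupZd H) (LH : forall x, inL u x -> H x)
  (THg : forall x, satL u (fun s => calW u W s \/ scriptW1 u W s) x <-> H (x - g))
  (r_class : forall x, H (r x - x)) (r_eq : forall x y, H (y - x) -> r x = r y).

Definition transversal (k : Zd d) : Prop := congL u (k + g) (r (k + g)).

Lemma transversal_congL k k' : transversal k -> congL u k' k -> transversal k'.
Proof.
move=> Kk k'k; rewrite /transversal (r_eq (y := k + g)); last first.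
  have -> : k + g - (k' + g) = - (k' - k) by row_ring.
  by apply/(subgroupZdN subH)/LH.
by inL_by ((k' - k) + (k + g - r (k + g))).
Qed.

Lemma transversal_repr x : transversal (r x - g).
Proof. by rewrite /transversal subrK -(r_eq (r_class x)); apply: congL_refl. Qed.

Lemma W_coset w : W w -> H (w - g).
Proof. by move=> Ww; apply/THg/W_satL. Qed.

(* [m + w = k + w'] modulo [L] forces [k - m] into [H], and a transversal meets
   each coset of [H] in a single coset of [L]. *)
Lemma transversal_congL_W m k w w' : transversal m -> transversal k ->
  W w -> W w' -> congL u (m + w) (k + w') -> congL u w w'.
Proof.
move=> Km Kk Ww Ww' mwkw.
have Hww : H (w - w').
  have -> : w - w' = (w - g) - (w' - g) by row_ring.
  by apply: subH.2; apply: W_coset.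
have Hkm : H (k + g - (m + g)).
  have -> : k + g - (m + g) = (w - w') - (m + w - (k + w')) by row_ring.
  by apply: subH.2 => //; apply: LH.
move: Km; rewrite /transversal (r_eq Hkm) => Km.
by inL_by ((m + w - (k + w')) - ((m + g - r (k + g)) - (k + g - r (k + g)))).
Qed.

Lemma transversal_anchored k s :
  transversal k -> scriptW1 u W s -> anchored u W transversal k s.
Proof.
move=> Kk Ss; split => // [y yks | m w Km Sw]; last first.
  exact: transversal_congL_W Km Kk (scriptW1_W Sw) (scriptW1_W Ss).
apply: (forcedP Zf EP) => m t Km Ct ymt; apply: (proj2 Ss t Ct); apply: congL_sym.
apply: transversal_congL_W Km Kk (calW_W Ct) (scriptW1_W Ss) _.
by inL_by ((y - (k + s)) - ((y - m) - t)).
Qed.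

Lemma minimal_complement_of_translate s :
  scriptW1 u W s -> exists M, is_minimal_complement M W.
Proof.
move=> Ss.
have T_shift x : satL u (fun s => calW u W s \/ scriptW1 u W s) (x - (r x - g)).
  apply/THg; have -> : x - (r x - g) - g = - (r x - x) by row_ring.
  exact: subgroupZdN.
apply: (minimal_complement_of_anchors EP (K := transversal)) => x.
  have [t Tt xt] := T_shift x; exists (x - t), t; split; last by rewrite subrK.
  - by apply: transversal_congL (transversal_repr x) _; inL_by (x - (r x - g) - t).
  - by case: Tt => [/calW_W | /scriptW1_W].
have [t [Ct | St] xt] := T_shift x.
  right; exists (r x - g), s, t; split => //.
    exact: transversal_anchored (transversal_repr x) Ss.
  by inL_by (x - (r x - g) - t).
left; have [_ Kt_forced _] := transversal_anchored (transversal_repr x) St.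
by apply: Kt_forced; inL_by (x - (r x - g) - t).
Qed.
End TranslateOfSubgroup.

Lemma minimal_complement_of_subgroup_translate d (u : 'I_d -> Zd d) (W : zset d)
    (H : zset d) (g s : Zd d) :
  Zfree u -> eventually_periodic u W -> subgroupZd H -> (forall x, inL u x -> H x) ->
  (forall x, satL u (fun s => calW u W s \/ scriptW1 u W s) x <-> H (x - g)) ->
  scriptW1 u W s -> exists M, is_minimal_complement M W.
Proof.
move=> Zf EP subH LH THg Ss.
have [r [r_class r_eq]] := @exists_class_repr (Zd d) (fun x z => H (z - x))
  (fun x => eq_ind_r H subH.1 (subrr x))
  (fun x y Hyx => eq_ind _ H (subgroupZdN subH Hyx) _ (opprB y x))
  (fun x y z Hyx Hzy => eq_ind _ H (subgroupZdD subH Hzy Hyx) _ (subrKA y z (- x))).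
exact (minimal_complement_of_translate Zf EP subH LH THg r_class r_eq Ss).
Qed.

Section OrderTwo.
Variables (d : nat) (u : 'I_d -> Zd d) (W : zset d).
Hypotheses (Zf : Zfree u) (EP : eventually_periodic u W).
Hypothesis two : forall x, inL u (x *+ 2).

Lemma subgroupZd_L_or_coset h : subgroupZd (fun x => inL u x \/ congL u x h).
Proof.
have h2 := two h.
split=> [|x y]; first by left; apply: inL0.
case=> [Lx | xh] [Ly | yh].
- by left; inL_by (x - y).
- by right; inL_by (x - (y - h) - h *+ 2).
- by right; inL_by ((x - h) - y).
- by left; inL_by ((x - h) - (y - h)).
Qed.

Lemma minimal_complement_of_singletons a b :
  scriptW1 u W a -> (forall w, scriptW1 u W w -> congL u w a) ->
  calW u W b -> (forall w, calW u W w -> congL u w b) ->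
  exists M, is_minimal_complement M W.
Proof.
move=> Sa S_a Cb C_b; have ab2 := two (a - b).
apply: (minimal_complement_of_subgroup_translate Zf EP
  (subgroupZd_L_or_coset (a - b)) _ _ Sa).
  by move=> x Lx; left.
move=> x; split => [[s [/C_b sb | /S_a sa] xs] | [xa | xab]].
- by right; inL_by ((x - s) + (s - b) - (a - b) *+ 2).
- by left; inL_by ((x - s) + (s - a)).
- by exists a => //; right.
- by exists b => //; [left | inL_by ((x - a - (a - b)) + (a - b) *+ 2)].
Qed.

Section ComplementSingleton.
Variables (c s : Zd d).
Hypotheses (T_c : forall x,
    ~ satL u (fun s => scriptW1 u W s \/ calW u W s) x <-> congL u x c)
  (Ss : scriptW1 u W s).

Definition two_cosets (k : Zd d) : Prop := inL u k \/ congL u k (c + s).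

Lemma W_not_congL_c w : W w -> ~ congL u w c.
Proof.
move=> Ww /T_c; apply; have [t Tt wt] := W_satL Zf EP Ww.
by exists t => //; case: Tt; [right | left].
Qed.

(* Picked up by [inL_by] from the context. *)
Let L2c := two c.
Let L2s := two s.

Lemma two_cosets_anchored0 : anchored u W two_cosets 0 s.
Proof.
split => // [y ys | m w [Lm | mcs] Sw mws].
- apply: (forcedP Zf EP) => m t [Lm | mcs] Ct ymt.
    by apply: (proj2 Ss t Ct); inL_by ((y - m - t) - (y - (0 + s)) + m).
  apply: (W_not_congL_c (calW_W Ct)).
  by inL_by ((y - (0 + s)) - (y - m - t) - (m - (c + s)) - c *+ 2).
- by inL_by ((m + w - (0 + s)) - m).
- case: (W_not_congL_c (scriptW1_W Sw)).
  by inL_by ((m + w - (0 + s)) - (m - (c + s)) - c *+ 2).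
Qed.

Lemma two_cosets_anchored_cs : anchored u W two_cosets (c + s) s.
Proof.
split => // [y ys | m w [Lm | mcs] Sw mws].
- apply: (forcedP Zf EP) => m t [Lm | mcs] Ct ymt.
    apply: (W_not_congL_c (calW_W Ct)).
    by inL_by (- (y - m - t) + (y - (c + s + s)) - m + s *+ 2).
  by apply: (proj2 Ss t Ct); inL_by ((y - m - t) - (y - (c + s + s)) + (m - (c + s))).
- case: (W_not_congL_c (scriptW1_W Sw)).
  by inL_by ((m + w - (c + s + s)) - m + s *+ 2).
- by inL_by ((m + w - (c + s + s)) - (m - (c + s))).
Qed.

Lemma two_cosets_forced x :
  (forall t, calW u W t -> ~ congL u x t) ->
  (forall t, calW u W t -> ~ congL u x (c + s + t)) -> forced u W two_cosets x.
Proof.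
move=> x_calW' xcs_calW'; apply: (forcedP Zf EP) => m t [Lm | mcs] Ct xmt.
  by apply: (x_calW' t Ct); inL_by ((x - m - t) + m).
by apply: (xcs_calW' t Ct); inL_by ((x - m - t) + (m - (c + s))).
Qed.

Lemma minimal_complement_of_complement_singleton : exists M, is_minimal_complement M W.
Proof.
apply: (minimal_complement_of_anchors EP (K := two_cosets)) => x.
  case: (classic (congL u x c)) => [xc | xc'].
    exists (x - s), s; split; [right | exact: scriptW1_W Ss | by rewrite subrK].
    by inL_by ((x - c) - s *+ 2).
  have [t Tt xt] : satL u (fun s => scriptW1 u W s \/ calW u W s) x.
    by apply: NNPP => /T_c.
  exists (x - t), t; split; [by left | | by rewrite subrK].
  by case: Tt => [/scriptW1_W | /calW_W].
case: (classic (exists2 t, calW u W t & congL u x (0 + t))) => [[t Ct xt] | x0'].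
  by right; exists 0, s, t; split => //; apply: two_cosets_anchored0.
case: (classic (exists2 t, calW u W t & congL u x (c + s + t))) => [[t Ct xt] | xcs'].
  by right; exists (c + s), s, t; split => //; apply: two_cosets_anchored_cs.
left; apply: two_cosets_forced => t Ct xt.
  by apply: x0'; exists t; rewrite ?add0r.
by apply: xcs'; exists t.
Qed.
End ComplementSingleton.
End OrderTwo.

Unset Implicit Arguments.

Theorem proposition4p21 (d : nat) (u : 'I_d -> Zd d) (W : zset d) :
  (0 < d)%N ->
  Zfree u ->
  eventually_periodic u W ->
  (exists w, scriptW1 u W w) ->
  ( (* (1) pi(calW cup scriptW1) is a translate g + H of a subgroup H of Z^d/L,
         H represented by its preimage, a subgroup of Z^d containing L *)
    (exists (H : zset d) (g : Zd d),
       [/\ subgroupZd H, (forall x, inL u x -> H x) &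
           forall x, satL u (fun s => calW u W s \/ scriptW1 u W s) x <-> H (x - g)])
    \/
    (* (2) every element of Z^d/L has order dividing 2 *)
    ((forall x : Zd d, inL u (x *+ 2)) /\
     ( (* (a) pi(scriptW1) and pi(calW) are singletons *)
       ((exists a, scriptW1 u W a /\ forall w, scriptW1 u W w -> congL u w a) /\
        (exists b, calW u W b /\ forall w, calW u W w -> congL u w b))
       \/
       (* (b) the complement of pi(scriptW1 cup calW) in Z^d/L is a singleton *)
       (exists c : Zd d, forall x,
          ~ satL u (fun s => scriptW1 u W s \/ calW u W s) x <-> congL u x c)))) ->
  exists M : zset d, is_minimal_complement M W.
Proof.
move=> _ Zf EP [s Ss].
case=> [[H [g [subH LH THg]]] | [two [[[a [Sa S_a]] [b [Cb C_b]]] | [c T_c]]]].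
- exact: (minimal_complement_of_subgroup_translate Zf EP subH LH THg Ss).
- exact: (minimal_complement_of_singletons Zf EP two Sa S_a Cb C_b).
- exact: (minimal_complement_of_complement_singleton Zf EP two T_c Ss).
Qed.
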